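(* Let $G=(X\cup Y,E)$ be a bipartite graph and let $t_0>0$. Let $\mathcal A$ be the set of all $A\subseteq X$ such that every component of $A$ is closed and $t_0$-contracting. Then \[ i(G)=\sum_{A\in\mathcal A}\mathcal D_A\cdot 2^{|Y\setminus N(A)|}\cdot \Xi_A, \] where $\mathcal D_A:=\prod_{A'\in\mathcal K(A)}\bigl|\{B\subseteq A' : B \text{ is 2-linked and } N(B)=N(A')\}\bigr|$ and \[ \Xi_A:=\sum_{k\ge 0}\ \sum_{\substack{\{B_1,\dots,B_k\}\subseteq \mathcal P_A \text{ compatible}\\ \text{each } B_i \text{ not } t_0\text{-contracting}}} 2^{-\sum_{i=1}^k|N(B_i)|}, \] the inner sum being over unordered collections (the case $k=0$ contributing $1$).
   Context: $i(G)$ is the number of independent sets of $G$. For $S\subseteq V$, $N(S)$ is the set of vertices adjacent to some vertex of $S$, and $N^2(S)=N(N(S))$. A set $A\subseteq X$ is 2-linked if it induces a connected subgraph of the square $G^2$ of $G$ (equivalently, any two of its vertices are joined by a sequence of vertices of $A$ with consecutive ones sharing a common neighbour); the components of $A$ are its maximal 2-linked subsets, and $\mathcal K(A)$ is the set of components of $A$. The closure of $A\subseteq X$ is $[A]:=\{x\in X: N(x)\subseteq N(A)\}$; $A$ is closed if $A=[A]$. A set $A\subseteq X$ is $t$-contracting if $|N(A)|<|[A]|+t$. A polymer is a 2-linked subset of $X$; a collection of polymers is compatible if their neighbourhoods are pairwise disjoint. For $A\subseteq X$, $X_A:=X\setminus N^2(A)$ and $\mathcal P_A$ is the set of polymers contained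 in $X_A$.
   Formalization: The bipartite graph G has no isolated vertex in X: every x ∈ X has at least one neighbour in Y. The statement above fails without it. *)

From HB Require Import structures.
From mathcomp Require Import all_boot all_order all_algebra.
Set Implicit Arguments. Unset Strict Implicit. Unset Printing Implicit Defensive.
Import Order.TTheory GRing.Theory Num.Theory.
Local Open Scope ring_scope.

Section Bipartite.
Variables (X Y : finType) (adj : X -> Y -> bool).

Definition bip_edge (u v : X + Y) : bool :=
  match u, v with
  | inl x, inr y => adj x y
  | inr y, inl x => adj x y
  | _, _ => false
  end.

Definition independent (I : {set X + Y}) : bool :=
  [forall u in I, forall v in I, ~~ bip_edge u v].

Definition num_indep : nat := #|[set I : {set X + Y} | independent I]|.

Definition nbhd (A : {set X}) : {set Y} := [set y | [exists x in A, adj x y]].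

Definition nbhd2 (A : {set X}) : {set X} :=
  [set x | [exists y in nbhd A, adj x y]].

(* x and x' share a common neighbour, i.e. are adjacent in the square G^2. *)
Definition share_nb (x x' : X) : bool := [exists y, adj x y && adj x' y].

Definition two_linked (A : {set X}) : bool :=
  (A != set0) &&
  [forall x in A, forall x' in A,
     connect [rel u v | [&& u \in A, v \in A & share_nb u v]] x x'].

Definition comps (A : {set X}) : {set {set X}} :=
  [set C : {set X} | [&& C \subset A, two_linked C &
     [forall D : {set X}, [&& C \subset D, D \subset A & two_linked D] ==> (D == C)]]].

Definition closure (A : {set X}) : {set X} :=
  [set x | nbhd [set x] \subset nbhd A].

Definition closed (A : {set X}) : bool := closure A == A.

Definition polymer (B : {set X}) : bool := two_linked B.

Definition compatible (P : {set {set X}}) : bool :=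
  [forall B1 in P, forall B2 in P, (B1 != B2) ==> [disjoint nbhd B1 & nbhd B2]].

Definition XA (A : {set X}) : {set X} := ~: nbhd2 A.

Definition DA (A : {set X}) : nat :=
  \prod_(A' in comps A)
     #|[set B : {set X} | [&& B \subset A', two_linked B & nbhd B == nbhd A']]|.

Variable R : realFieldType.

Definition contracting (t : R) (A : {set X}) : bool :=
  (#|nbhd A|%:R < #|closure A|%:R + t).

Definition calA (t : R) : {set {set X}} :=
  [set A : {set X} | [forall C in comps A, closed C && contracting t C]].

Definition XiA (t : R) (A : {set X}) : R :=
  \sum_(P : {set {set X}} | compatible P &&
          [forall B in P, [&& polymer B, B \subset XA A & ~~ contracting t B]])
     (2%:R : R) ^- (\sum_(B in P) #|nbhd B|)%N.

End Bipartite.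

From Pilot Require Import Defs.
From HB Require Import structures.
From mathcomp Require Import all_boot all_order all_algebra.
Import Order.TTheory GRing.Theory Num.Theory.
Set Implicit Arguments. Unset Strict Implicit. Unset Printing Implicit Defensive.

(* The formula reorganises the elementary count
     i(G) = \sum_(S \subset X) 2^|Y \ N(S)|,
   since an independent set is a set S \subset X together with any subset of
   Y \ N(S).  Every S \subset X is split along its components (maximal
   2-linked subsets): the t-contracting ones form S1, and the closures of
   these form a set A whose components are closed and t-contracting, i.e.
   A is in calA; inside each component A' of A, S1 :&: A' is a 2-linked set
   with neighbourhood N(A') (these choices are counted by D_A); the other
   components form a compatible family P of non-contracting polymers in
   X \ N^2(A) (summed over in Xi_A).  Conversely (A, S1, P) determines
   S = S1 \cup \bigcup P, and |Y \ N(S)| = |Y \ N(A)| - \sum_(B in P) |N(B)|.  No vertex of X is isolated, so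
   every vertex shares a neighbour with itself and distinct components are
   disjoint. *)

Section Counting.
Variable T : finType.

Lemma card_bigcup_disjoint (I : finType) (P : {set I}) (f : I -> {set T}) :
  {in P &, forall i j, i != j -> [disjoint f i & f j]} ->
  #|\bigcup_(i in P) f i| = \sum_(i in P) #|f i|.
Proof.
elim: {P}_.+1 {-2}P (ltnSn #|P|) => // n IH P ltPn disjP.
have [-> | [a Pa]] := set_0Vmem P; first by rewrite !big_set0 cards0.
have ltP'n : #|P :\ a| < n by rewrite -ltnS (leq_trans _ ltPn) // (cardsD1 a P) Pa.
have disjP' : {in P :\ a &, forall i j, i != j -> [disjoint f i & f j]}.
  by move=> i j /setD1P[_ Pi] /setD1P[_ Pj]; apply: disjP.
have disj_a : [disjoint f a & \bigcup_(i in P :\ a) f i].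
  by apply/bigcup_disjointP => i /setD1P[nia Pi]; apply: disjP; rewrite // eq_sym.
rewrite !(big_setD1 a Pa) /= -(IH _ ltP'n disjP').
by apply/eqP; rewrite (leq_card_setU _ _).2.
Qed.

Lemma bigcup_trivI_meet (K : {set {set T}}) (f : {set T} -> {set T}) A :
  trivIset K -> {in K, forall B, f B \subset B} -> A \in K ->
  (\bigcup_(B in K) f B) :&: A = f A.
Proof.
move=> /trivIsetP tK fB hA; apply/setP => x; rewrite inE.
apply/andP/idP => [[/bigcupP[B hB hxB] hxA] | hx].
  have [<- // | neBA] := eqVneq B A.
  have /disjointFr := tK B A hB hA neBA.
  by move=> /(_ x (subsetP (fB B hB) x hxB)); rewrite hxA.
by split; [apply/bigcupP; exists A | apply: (subsetP (fB A hA))].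
Qed.

Lemma card_local_choices (K : {set {set T}}) (F : {set T} -> {set {set T}}) :
  trivIset K -> (forall A B, A \in K -> B \in F A -> B \subset A) ->
  \prod_(A in K) #|F A| =
  #|[set S : {set T} | (S \subset cover K) && [forall A in K, (S :&: A) \in F A]]|.
Proof.
move=> tK FA; pose glue (f : {ffun {set T} -> {set T}}) := \bigcup_(A in K) f A.
have card_fam : #|pfamily set0 K F| = \prod_(A in K) #|F A|.
  by rewrite card_pfamily foldrE big_map big_enum.
have famP f : f \in pfamily set0 K F -> {in K, forall A, f A \subset A}.
  by case/pfamilyP => _ hf A hA; apply: FA hA (hf A hA).
have glueK f A : f \in pfamily set0 K F -> A \in K -> glue f :&: A = f A.
  by move=> /famP fA hA; apply: bigcup_trivI_meet.
rewrite -card_fam -(card_in_imset (f := glue)); last first.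
  move=> f g ff fg eq_fg; apply/ffunP => A.
  have [hA | nA] := boolP (A \in K); first by rewrite -!glueK // eq_fg.
  by case/pfamilyP: ff => /supportP-> //; case/pfamilyP: fg => /supportP->.
apply: eq_card => S; rewrite inE; apply/imsetP/andP.
  case=> f ff ->; split.
    by apply/bigcupsP => A hA; apply: subset_trans (famP f ff A hA) (bigcup_sup _ hA).
  apply/forallP => A; apply/implyP => hA.
  by rewrite glueK //; case/pfamilyP: ff => _; apply.
case=> SK /forallP SF; pose f := [ffun A => if A \in K then S :&: A else set0].
have ff : f \in pfamily set0 K F.
  apply/pfamilyP; split; first by apply/supportP => A /negbTE nA; rewrite ffunE nA.
  by move=> A hA; rewrite ffunE hA; apply: (implyP (SF A)).
exists f => //; apply/setP => x; apply/idP/bigcupP => [Sx | [A hA]].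
  by case/bigcupP: (subsetP SK x Sx) => A hA Ax; exists A; rewrite // ffunE hA inE Sx.
by rewrite ffunE hA => /setIP[].
Qed.

End Counting.

Lemma connect_restrict (T : finType) (e : rel T) (a : pred T) x y :
  (forall u v, a u -> e u v -> a v) -> a x -> connect e x y ->
  connect [rel u v | [&& a u, a v & e u v]] x y.
Proof.
move=> closed_a ax /connectP[p ep ->]; elim: p x ax ep => [|w p IH] x ax /=.
  by rewrite connect0.
case/andP=> exw ep; have aw := closed_a _ _ ax exw.
by apply: (@connect_trans _ _ w); [apply: connect1; rewrite /= ax aw | exact: IH].
Qed.

Section Graph.
Variables (X Y : finType) (adj : X -> Y -> bool).
Hypothesis no_isolated : forall x : X, exists y : Y, adj x y.

Local Notation N := (nbhd adj).
Local Notation cl := (Defs.closure adj).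
Local Notation linked := (two_linked adj).
Local Notation share := (share_nb adj).
Implicit Types (A B C D S : {set X}) (K P : {set {set X}}).

Lemma nbhdP A y : reflect (exists2 x, x \in A & adj x y) (y \in N A).
Proof.
rewrite inE; apply: (iffP existsP) => [[x /andP[]] | [x xA xy]]; first by exists x.
by exists x; rewrite xA.
Qed.

Lemma mem_nbhd A x y : x \in A -> adj x y -> y \in N A.
Proof. by move=> xA xy; apply/nbhdP; exists x. Qed.

Lemma nbhdS A B : A \subset B -> N A \subset N B.
Proof.
by move=> sAB; apply/subsetP => y /nbhdP[x xA xy]; apply: mem_nbhd (subsetP sAB x xA) xy.
Qed.

Lemma shareP x x' : reflect (exists y, adj x y /\ adj x' y) (share x x').
Proof.
apply: (iffP existsP) => [[y /andP[]] | [y [xy x'y]]]; first by exists y.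
by exists y; rewrite xy.
Qed.

Lemma share_refl x : share x x.
Proof. by case: (no_isolated x) => y xy; apply/shareP; exists y. Qed.

Lemma share_sym x x' : share x x' = share x' x.
Proof. by apply/shareP/shareP => -[y []]; exists y. Qed.

(* The closure [A] has the same neighbourhood as A, so it is idempotent and
   depends on A only through N(A). *)
Lemma closureE A x : (x \in cl A) = (N [set x] \subset N A).
Proof. by rewrite inE. Qed.

Lemma subset_closure A : A \subset cl A.
Proof. by apply/subsetP => x xA; rewrite closureE nbhdS // sub1set. Qed.

Lemma closure_adj A x y : x \in cl A -> adj x y -> y \in N A.
Proof. by rewrite closureE => /subsetP sN xy; apply/sN/(mem_nbhd (set11 x)). Qed.

Lemma nbhd_closure A : N (cl A) = N A.
Proof.
apply/eqP; rewrite eqEsubset (nbhdS (subset_closure A)) andbT.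
by apply/subsetP => y /nbhdP[x xA xy]; apply: closure_adj xA xy.
Qed.

Lemma closure_nbhd A B : N A = N B -> cl A = cl B.
Proof. by move=> eqN; apply/setP => x; rewrite !closureE eqN. Qed.

Lemma closure_idem A : cl (cl A) = cl A.
Proof. by apply: closure_nbhd; rewrite nbhd_closure. Qed.

Definition sq_rel (A : {set X}) : rel X := [rel u v | [&& u \in A, v \in A & share u v]].
Arguments sq_rel A u v /.

Lemma connect_sq_relC A u v : connect (sq_rel A) u v = connect (sq_rel A) v u.
Proof.
apply: sym_connect_sym => u' v' /=; rewrite share_sym.
by case: (u' \in A); case: (v' \in A).
Qed.

Lemma connect_sq_relS A B u v :
  A \subset B -> connect (sq_rel A) u v -> connect (sq_rel B) u v.
Proof.
move=> sAB; apply: connect_sub => a b /and3P[aA bA ab]; apply: connect1.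
by rewrite /= (subsetP sAB _ aA) (subsetP sAB _ bA).
Qed.

Lemma two_linkedP A :
  reflect (A != set0 /\ {in A &, forall x x', connect (sq_rel A) x x'}) (linked A).
Proof.
apply: (iffP andP) => [[nA /forallP cA] | [nA cA]]; split => //.
  by move=> x x' xA x'A; have /forall_inP := implyP (cA x) xA; apply.
by apply/forall_inP => x xA; apply/forall_inP => x' x'A; apply: cA.
Qed.

Lemma two_linkedU A B a b :
  linked A -> linked B -> a \in A -> b \in B -> share a b -> linked (A :|: B).
Proof.
move=> /two_linkedP[_ cA] /two_linkedP[_ cB] aA bB ab.
have from_a w : w \in A :|: B -> connect (sq_rel (A :|: B)) a w.
  case/setUP => wAB; first by apply: connect_sq_relS (subsetUl A B) (cA _ _ aA wAB).
  apply: (@connect_trans _ _ b); first by apply: connect1; rewrite /= !inE aA bB ab orbT.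
  exact: connect_sq_relS (subsetUr A B) (cB _ _ bB wAB).
apply/two_linkedP; split; first by apply/set0Pn; exists a; rewrite inE aA.
by move=> u v uAB vAB; rewrite (connect_trans _ (from_a v vAB)) // connect_sq_relC from_a.
Qed.

(* The closure of a 2-linked set is 2-linked: every vertex of [A] shares a
   neighbour with some vertex of A. *)
Lemma two_linked_closure A : linked A -> linked (cl A).
Proof.
move=> /two_linkedP[nA cA].
have to_A u : u \in cl A -> exists2 c, c \in A & connect (sq_rel (cl A)) u c.
  move=> uA; case: (no_isolated u) => y uy.
  case/nbhdP: (closure_adj uA uy) => c cA' cy; exists c => //.
  by apply: connect1; rewrite /= uA (subsetP (subset_closure A) _ cA'); apply/shareP; exists y.
apply/two_linkedP; split.
  by case/set0Pn: nA => a aA; apply/set0Pn; exists a; apply: (subsetP (subset_closure A)).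
move=> u v uA vA; case: (to_A u uA) => c cA' uc; case: (to_A v vA) => c' c'A vc'.
apply: (connect_trans uc); rewrite (connect_trans _ (_ : connect _ c' v)) //.
  exact: connect_sq_relS (subset_closure A) (cA _ _ cA' c'A).
by rewrite connect_sq_relC.
Qed.

Lemma compsP S C :
  reflect [/\ C \subset S, linked C &
             forall D, C \subset D -> D \subset S -> linked D -> D = C]
          (C \in comps adj S).
Proof.
rewrite inE; apply: (iffP and3P) => [[CS lC /forallP maxC] | [CS lC maxC]].
  by split => // D CD DS lD; apply/eqP; move: (maxC D); rewrite CD DS lD.
by split => //; apply/forallP => D; apply/implyP => /and3P[CD DS lD]; rewrite (maxC D).
Qed.

Lemma comps_sub S C : C \in comps adj S -> C \subset S.
Proof. by case/compsP. Qed.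

Lemma comps_linked S C : C \in comps adj S -> linked C.
Proof. by case/compsP. Qed.

Lemma comps_share S C D c d : C \in comps adj S -> D \in comps adj S ->
  c \in C -> d \in D -> share c d -> C = D.
Proof.
move=> /compsP[CS lC maxC] /compsP[DS lD maxD] cC dD cd.
have lCD := two_linkedU lC lD cC dD cd.
have CDS : C :|: D \subset S by rewrite subUset CS DS.
by rewrite -(maxC _ (subsetUl C D) CDS lCD) (maxD _ (subsetUr C D) CDS lCD).
Qed.

Lemma comps_nbhd S C D y : C \in comps adj S -> D \in comps adj S ->
  y \in N C -> y \in N D -> C = D.
Proof.
move=> CS DS /nbhdP[c cC cy] /nbhdP[d dD dy].
by apply: (comps_share CS DS cC dD); apply/shareP; exists y.
Qed.

Lemma trivIset_comps S : trivIset (comps adj S).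
Proof.
apply/trivIsetP => C D CS DS neCD; apply/pred0P => x /=.
by apply: contraNF neCD => /andP[xC xD]; rewrite (comps_share CS DS xC xD (share_refl x)).
Qed.

(* Every vertex of S lies in a component of S: its class for the square of
   G restricted to S. *)
Lemma comps_cover S x : x \in S -> exists2 C, C \in comps adj S & x \in C.
Proof.
move=> xS; pose D := [set y in S | connect (sq_rel S) x y].
have xD : x \in D by rewrite inE xS connect0.
have DS : D \subset S by apply/subsetP => y /setIdP[].
have D_closed u v : u \in D -> sq_rel S u v -> v \in D.
  move=> /setIdP[_ xu] uv; rewrite inE (connect_trans xu (connect1 uv)) andbT.
  by case/and3P: uv.
exists D => //; apply/compsP; split => //.
  apply/two_linkedP; split; first by apply/set0Pn; exists x.
  move=> u v uD vD; have /setIdP[_ xu] := uD; have /setIdP[_ xv] := vD.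
  have uv : connect (sq_rel S) u v by rewrite (connect_trans _ xv) // connect_sq_relC.
  apply: connect_sub (connect_restrict D_closed uD uv) => a b /and3P[aD bD /and3P[_ _ ab]].
  by apply: connect1; rewrite /= aD bD.
move=> E DE ES /two_linkedP[_ cE]; apply/eqP; rewrite eqEsubset DE andbT.
apply/subsetP => e eE; rewrite inE (subsetP ES _ eE).
exact: connect_sq_relS ES (cE _ _ (subsetP DE _ xD) eE).
Qed.

Lemma comps_bigcup K :
  {in K, forall C, linked C} ->
  (forall C D c d, C \in K -> D \in K -> c \in C -> d \in D -> share c d -> C = D) ->
  comps adj (\bigcup_(C in K) C) = K.
Proof.
move=> lK sepK; set S := \bigcup_(C in K) C.
have K_comps C : C \in K -> C \in comps adj S.
  move=> CK; apply/compsP; split; [exact: bigcup_sup | exact: lK |].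
  move=> D CD DS /two_linkedP[_ cD]; apply/eqP; rewrite eqEsubset CD andbT.
  have /two_linkedP[/set0Pn[c cC] _] := lK C CK.
  have C_closed : closed (sq_rel D) (mem C).
    have stepC u v : sq_rel D u v -> u \in C -> v \in C.
      move=> /and3P[_ vD uv] uC; case/bigcupP: (subsetP DS _ vD) => C' C'K vC'.
      by rewrite (sepK C C' u v CK C'K uC vC' uv).
    move=> u v uv; apply/idP/idP; first exact: stepC.
    by apply: stepC; case/and3P: uv => uD vD uv; rewrite /= uD vD share_sym.
  by apply/subsetP => d dD; rewrite -(closed_connect C_closed (cD c d (subsetP CD c cC) dD)).
apply/setP => D; apply/idP/idP; last exact: K_comps.
move=> DS; have /two_linkedP[/set0Pn[d dD] _] := comps_linked DS.
case/bigcupP: (subsetP (comps_sub DS) _ dD) => C CK dC.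
by rewrite (comps_share DS (K_comps C CK) dD dC (share_refl d)).
Qed.

Definition sides (I : {set X + Y}) : {set X} * {set Y} :=
  ([set x | inl x \in I], [set y | inr y \in I]).

Lemma sides_inj : injective sides.
Proof.
move=> I J [/setP eqX /setP eqY]; apply/setP => -[x | y].
  by have := eqX x; rewrite !inE.
by have := eqY y; rewrite !inE.
Qed.

Lemma independent_sides I :
  independent adj I = ((sides I).2 \subset ~: N (sides I).1).
Proof.
apply/idP/subsetP => [indI y | avoid].
  rewrite /= inE in_setC => yI; apply/nbhdP => -[x]; rewrite inE => xI xy.
  by have /forall_inP/(_ _ yI) := forall_inP indI (inl x) xI; rewrite /= xy.
apply/forall_inP => -[x | y] uI; apply/forall_inP => -[x' | y'] vI //=; apply/negP => e.
  have := avoid y'; rewrite /= inE vI in_setC => /(_ isT)/nbhdP; apply.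
  by exists x; rewrite ?inE.
have := avoid y; rewrite /= inE uI in_setC => /(_ isT)/nbhdP; apply.
by exists x'; rewrite ?inE.
Qed.

Lemma num_indep_sum : num_indep adj = \sum_(S : {set X}) 2 ^ #|~: N S|.
Proof.
have image_sides : sides @: [set I | independent adj I] =
                   [set p : {set X} * {set Y} | p.2 \subset ~: N p.1].
  apply/setP => -[S T]; rewrite inE; apply/imsetP/idP => [[I] | avoid].
    by rewrite inE independent_sides => indI ->.
  pose I := [set u | match u with inl x => x \in S | inr y => y \in T end].
  have sidesI : sides I = (S, T) by congr pair; apply/setP => z; rewrite !inE.
  by exists I; rewrite // inE independent_sides sidesI.
rewrite /num_indep -(card_imset _ sides_inj) image_sides -sum1dep_card.
rewrite -(pair_big_dep predT (fun S (T : {set Y}) => T \subset ~: N S) (fun _ _ => 1%N)) /=.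
apply: eq_bigr => S _; rewrite sum1dep_card -card_powerset.
by apply: eq_card => T; rewrite powersetE.
Qed.

Section Decomposition.
Variables (R : realFieldType) (t : R).
Local Notation ctr := (contracting adj t).

Lemma contracting_nbhd A B : N A = N B -> ctr A = ctr B.
Proof. by move=> eqN; rewrite /contracting (closure_nbhd eqN) eqN. Qed.

Definition contracting_part (S : {set X}) : {set X} :=
  \bigcup_(C in comps adj S | ctr C) C.
Definition free_comps (S : {set X}) : {set {set X}} := [set C in comps adj S | ~~ ctr C].
Definition hull (S : {set X}) : {set X} := \bigcup_(C in comps adj S | ctr C) cl C.

(* The data recording S given its hull A: the 2-linked subsets of a
   component A' of A with the same neighbourhood (counted by D_A), the
   choices of one of them in every component, and the families of
   polymers summed over in Xi_A. *)
Definition spanning_linked (A' : {set X}) : {set {set X}} :=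
  [set B : {set X} | [&& B \subset A', linked B & N B == N A']].
Definition spanning_choice (A S1 : {set X}) : bool :=
  (S1 \subset A) && [forall A' in comps adj A, (S1 :&: A') \in spanning_linked A'].
Definition admissible (A : {set X}) (P : {set {set X}}) : bool :=
  compatible adj P && [forall B in P, [&& polymer adj B, B \subset XA adj A & ~~ ctr B]].
Definition glue (S1 : {set X}) (P : {set {set X}}) : {set X} := S1 :|: \bigcup_(B in P) B.

(* D_A counts the spanning choices, as the components of A partition A. *)
Lemma DA_card A : DA adj A = #|[set S1 | spanning_choice A S1]|.
Proof.
have spanning_sub A' B : A' \in comps adj A -> B \in spanning_linked A' -> B \subset A'.
  by move=> _; rewrite inE => /and3P[].
have cover_comps : cover (comps adj A) = A.
  apply/setP => x; apply/bigcupP/idP => [[C CA xC] | xA].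
    exact: subsetP (comps_sub CA) x xC.
  by case: (comps_cover xA) => C CA xC; exists C.
rewrite /DA (card_local_choices (trivIset_comps A) spanning_sub) cover_comps.
by apply: eq_card => S1; rewrite !inE.
Qed.

(* The components of hull S are the closures of the contracting components
   of S: these are 2-linked and still have pairwise disjoint
   neighbourhoods. *)
Lemma comps_hull S :
  comps adj (hull S) = [set cl C | C in [set C in comps adj S | ctr C]].
Proof.
set K := [set cl C | C in _].
have -> : hull S = \bigcup_(D in K) D.
  apply/setP => x; apply/bigcupP/bigcupP => [[C CS xC] | [D]].
    by exists (cl C) => //; apply/imsetP; exists C; rewrite // inE.
  by case/imsetP=> C /setIdP[CS ctrC] -> xC; exists C; rewrite ?CS.
apply: comps_bigcup => [D /imsetP[C /setIdP[CS _] ->] | D1 D2 c d].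
  exact/two_linked_closure/(comps_linked CS).
move=> /imsetP[C1 /setIdP[C1S _] ->] /imsetP[C2 /setIdP[C2S _] ->] cC1 dC2 /shareP[y [cy dy]].
by rewrite (comps_nbhd C1S C2S (closure_adj cC1 cy) (closure_adj dC2 dy)).
Qed.

Lemma hull_calA S : hull S \in calA adj t.
Proof.
rewrite inE; apply/forall_inP => A'; rewrite comps_hull => /imsetP[C /setIdP[_ ctrC] ->].
by rewrite /Defs.closed closure_idem eqxx (contracting_nbhd (nbhd_closure C)).
Qed.

Lemma spanning_choice_hull S : spanning_choice (hull S) (contracting_part S).
Proof.
apply/andP; split.
  apply/bigcupsP => C CS; apply: subset_trans (subset_closure C) _.
  by rewrite /hull (bigcup_sup C CS).
apply/forall_inP => A'; rewrite comps_hull => /imsetP[C /setIdP[CS ctrC] ->].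
have -> : contracting_part S :&: cl C = C.
  apply/setP => x; rewrite inE; apply/andP/idP => [[/bigcupP[C' /andP[C'S _] xC'] xC] | xC].
    case: (no_isolated x) => y xy.
    by rewrite (comps_nbhd CS C'S (closure_adj xC xy) (mem_nbhd xC' xy)).
  split; last exact: subsetP (subset_closure C) x xC.
  by apply/bigcupP; exists C; rewrite ?CS.
by rewrite inE subset_closure (comps_linked CS) nbhd_closure eqxx.
Qed.

Lemma admissible_free_comps S : admissible (hull S) (free_comps S).
Proof.
apply/andP; split.
  apply/forall_inP => B1 /setIdP[B1S _]; apply/forall_inP => B2 /setIdP[B2S _].
  apply/implyP => neB; apply/pred0P => y /=; apply: contraNF neB => /andP[y1 y2].
  by rewrite (comps_nbhd B1S B2S y1 y2).
apply/forall_inP => B /setIdP[BS free]; rewrite /polymer (comps_linked BS) free andbT /=.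
apply/subsetP => x xB; rewrite !inE; apply/existsP => -[y /andP[/nbhdP[z zA zy] xy]].
case/bigcupP: zA => C /andP[CS ctrC] zC.
by move: free; rewrite (comps_nbhd BS CS (mem_nbhd xB xy) (closure_adj zC zy)) ctrC.
Qed.

Lemma glue_decomposition S : glue (contracting_part S) (free_comps S) = S.
Proof.
apply/setP => x; apply/idP/idP.
  case/setUP => /bigcupP[C]; [case/andP | case/setIdP] => CS _ xC;
    exact: subsetP (comps_sub CS) x xC.
move=> xS; case: (comps_cover xS) => C CS xC; rewrite inE.
have [ctrC | freeC] := boolP (ctr C).
  by apply/orP; left; apply/bigcupP; exists C; rewrite ?CS.
by apply/orP; right; apply/bigcupP; exists C; rewrite // inE CS.
Qed.

(* Conversely, a set A in calA, a spanning choice S1 in A and an admissible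
   family P are recovered from the set glue S1 P: its components are the
   traces of S1 on the components of A (which are contracting) and the
   members of P (which are not), and the neighbourhoods of the members of
   P are disjoint from N(A) and from each other. *)
Section Reconstruction.
Variables (A S1 : {set X}) (P : {set {set X}}).
Hypotheses (A_calA : A \in calA adj t) (S1_choice : spanning_choice A S1)
  (P_adm : admissible A P).

Lemma comps_calA A' : A' \in comps adj A -> cl A' = A' /\ ctr A'.
Proof.
move=> A'A; move: A_calA; rewrite inE => /forall_inP/(_ A' A'A)/andP[/eqP -> ->].
by [].
Qed.

Lemma choice_sub : S1 \subset A.
Proof. by case/andP: S1_choice. Qed.

Lemma choice_trace A' : A' \in comps adj A ->
  [/\ S1 :&: A' \subset A', linked (S1 :&: A') & N (S1 :&: A') = N A'].
Proof.
move=> A'A; case/andP: S1_choice => _ /forall_inP/(_ A' A'A).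
by rewrite inE => /and3P[? ? /eqP].
Qed.

Lemma admissible_mem B : B \in P -> [/\ linked B, B \subset XA adj A & ~~ ctr B].
Proof. by move=> BP; case/andP: P_adm => _ /forall_inP/(_ B BP)/and3P[]. Qed.

Lemma admissible_nbhd B y : B \in P -> y \in N B -> y \notin N A.
Proof.
move=> BP /nbhdP[b bB by']; case: (admissible_mem BP) => _ BXA _.
apply: contraTN (subsetP BXA b bB) => yA; rewrite !inE negbK.
by apply/existsP; exists y; rewrite yA by'.
Qed.

Lemma admissible_compatible B1 B2 y :
  B1 \in P -> B2 \in P -> y \in N B1 -> y \in N B2 -> B1 = B2.
Proof.
move=> B1P B2P y1 y2; apply/eqP; apply: contraT => neB.
case/andP: P_adm => /forall_inP/(_ B1 B1P)/forall_inP/(_ B2 B2P)/implyP/(_ neB) + _.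
by move=> /pred0P/(_ y); rewrite /= y1 y2.
Qed.

Definition traces : {set {set X}} := [set S1 :&: A' | A' in comps adj A].
Definition blocks : {set {set X}} := traces :|: P.

Lemma glue_blocks : glue S1 P = \bigcup_(D in blocks) D.
Proof.
apply/setP => x; apply/idP/bigcupP.
  case/setUP => [xS1 | /bigcupP[B BP xB]]; last by exists B; rewrite // inE BP orbT.
  case: (comps_cover (subsetP choice_sub x xS1)) => A' A'A xA'.
  by exists (S1 :&: A'); rewrite ?inE ?xS1 ?xA' // imset_f.
case=> D /setUP[/imsetP[A' _ ->] /setIP[xS1 _] | DP xD]; first by rewrite inE xS1.
by rewrite inE; apply/orP; right; apply/bigcupP; exists D.
Qed.

Lemma comps_glue : comps adj (glue S1 P) = blocks.
Proof.
have traceA A' x : x \in S1 :&: A' -> x \in A by case/setIP => /(subsetP choice_sub).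
rewrite glue_blocks; apply: comps_bigcup.
  move=> D /setUP[/imsetP[A' A'A ->] | DP]; first by case: (choice_trace A'A).
  by case: (admissible_mem DP).
move=> D1 D2 c d /setUP[/imsetP[A1 A1A ->] | D1P] /setUP[/imsetP[A2 A2A ->] | D2P]
  cD1 dD2 cd; have /shareP[y [cy dy]] := cd.
- have /setIP[_ cA1] := cD1; have /setIP[_ dA2] := dD2.
  by rewrite (comps_share A1A A2A cA1 dA2 cd).
- by have := admissible_nbhd D2P (mem_nbhd dD2 dy); rewrite (mem_nbhd (traceA _ _ cD1) cy).
- by have := admissible_nbhd D1P (mem_nbhd cD1 cy); rewrite (mem_nbhd (traceA _ _ dD2) dy).
- exact: admissible_compatible D1P D2P (mem_nbhd cD1 cy) (mem_nbhd dD2 dy).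
Qed.

Lemma contracting_blocks D : D \in blocks -> ctr D = (D \in traces).
Proof.
case/setUP => [DT | DP]; rewrite ?DT.
  case/imsetP: DT => A' A'A ->; case: (choice_trace A'A) => _ _ eqN.
  by rewrite (contracting_nbhd eqN); case: (comps_calA A'A).
case: (admissible_mem DP) => _ _ /negbTE ->; apply/esym/imsetP => -[A' A'A eqD].
case: (choice_trace A'A) => _ /two_linkedP[/set0Pn[x xT] _] _.
case/setIP: (xT) => /(subsetP choice_sub) xA _; case: (no_isolated x) => y xy.
have xD : x \in D by rewrite eqD.
by have := admissible_nbhd DP (mem_nbhd xD xy); rewrite (mem_nbhd xA xy).
Qed.

Lemma free_comps_glue : free_comps (glue S1 P) = P.
Proof.
apply/setP => D; rewrite inE comps_glue; apply/andP/idP => [[DB] | DP].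
  by rewrite (contracting_blocks DB) => /negbTE DT; case/setUP: DB; rewrite ?DT.
by split; [rewrite inE DP orbT | case: (admissible_mem DP)].
Qed.

Lemma contracting_comps_glue x : x \in A ->
  exists2 A', A' \in comps adj A & [/\ x \in A', S1 :&: A' \in comps adj (glue S1 P)
                                   & ctr (S1 :&: A')].
Proof.
move=> xA; case: (comps_cover xA) => A' A'A xA'; exists A' => //.
have TB : S1 :&: A' \in blocks by rewrite inE imset_f.
by rewrite comps_glue TB (contracting_blocks TB) imset_f.
Qed.

Lemma contracting_part_glue : contracting_part (glue S1 P) = S1.
Proof.
apply/setP => x; apply/bigcupP/idP.
  case=> D /andP[]; rewrite comps_glue => DB; rewrite (contracting_blocks DB).
  by case/imsetP => A' _ -> /setIP[].
move=> xS1; case: (contracting_comps_glue (subsetP choice_sub x xS1)) => A' _ [xA' TC ctrT].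
by exists (S1 :&: A'); rewrite ?TC ?inE ?xS1.
Qed.

Lemma hull_glue : hull (glue S1 P) = A.
Proof.
have cl_trace A' : A' \in comps adj A -> cl (S1 :&: A') = A'.
  by move=> A'A; case: (choice_trace A'A) => _ _ /closure_nbhd->; case: (comps_calA A'A).
apply/setP => x; apply/bigcupP/idP.
  case=> D /andP[]; rewrite comps_glue => DB; rewrite (contracting_blocks DB).
  by case/imsetP => A' A'A ->; rewrite cl_trace // => /(subsetP (comps_sub A'A)).
move=> xA; case: (contracting_comps_glue xA) => A' A'A [xA' TC ctrT].
by exists (S1 :&: A'); rewrite ?TC ?cl_trace.
Qed.

(* |Y \ N(A)| splits into |Y \ N(glue S1 P)| and the disjoint
   neighbourhoods of the members of P. *)
Lemma card_free_glue : (#|~: N (glue S1 P)| + \sum_(B in P) #|N B|)%N = #|~: N A|.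
Proof.
set U := \bigcup_(B in P) N B.
have nbhd_glue : N (glue S1 P) = N A :|: U.
  apply/eqP; rewrite eqEsubset; apply/andP; split; apply/subsetP => y.
    case/nbhdP => x /setUP[xS1 | /bigcupP[B BP xB]] xy; rewrite inE.
      by rewrite (mem_nbhd (subsetP choice_sub x xS1) xy).
    by apply/orP; right; apply/bigcupP; exists B; rewrite // (mem_nbhd xB xy).
  case/setUP => [/nbhdP[x xA xy] | /bigcupP[B BP /nbhdP[x xB xy]]].
    case: (comps_cover xA) => A' A'A xA'; case: (choice_trace A'A) => _ _ eqN.
    have : y \in N (S1 :&: A') by rewrite eqN (mem_nbhd xA' xy).
    by case/nbhdP => x' /setIP[x'S1 _] x'y; rewrite (mem_nbhd (x := x')) // inE x'S1.
  by apply: (mem_nbhd (x := x)) xy; rewrite inE; apply/orP; right; apply/bigcupP; exists B.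
have U_free : U \subset ~: N A.
  by apply/bigcupsP => B BP; apply/subsetP => y yB; rewrite inE (admissible_nbhd BP yB).
rewrite -card_bigcup_disjoint; last first.
  move=> B1 B2 B1P B2P neB; apply/pred0P => y /=; apply: contraNF neB => /andP[y1 y2].
  by rewrite (admissible_compatible B1P B2P y1 y2).
rewrite -/U -(cardsID U (~: N A)) (setIidPr U_free) addnC.
by rewrite nbhd_glue setCU setDE.
Qed.

Lemma decomposition_fibre S :
  ((hull S == A) && (contracting_part S == S1)) && (free_comps S == P) = (S == glue S1 P).
Proof.
apply/idP/eqP => [/andP[/andP[_ /eqP <-] /eqP <-] | ->]; first by rewrite glue_decomposition.
by rewrite hull_glue contracting_part_glue free_comps_glue !eqxx.
Qed.

End Reconstruction.

End Decomposition.

End Graph.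

Local Open Scope ring_scope.

(* Partition the sum over S \subset X according to (hull S, contracting_part
   S, free_comps S); each fibre is the single set glue S1 P, whose weight
   2^|Y \ N(S)| is 2^|Y \ N(A)| * 2^-(\sum_(B in P) |N(B)|). *)
Theorem mainTheorem2 (R : realFieldType) (X Y : finType) (adj : X -> Y -> bool)
  (t0 : R) (ht0 : 0 < t0)
  (hX : forall x : X, exists y : Y, adj x y) :
  (num_indep adj)%:R =
  \sum_(A in calA adj t0)
     (DA adj A)%:R * (2%:R : R) ^+ #|~: nbhd adj A| * XiA adj t0 A.
Proof.
rewrite (num_indep_sum adj) natr_sum; under eq_bigr do rewrite natrX.
rewrite (partition_big (hull adj t0) (mem (calA adj t0))) /=; last first.
  by move=> S _; apply: hull_calA.
apply: eq_bigr => A A_calA.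
rewrite (partition_big (contracting_part adj t0) (spanning_choice adj A)) /=; last first.
  by move=> S /eqP <-; apply: spanning_choice_hull.
rewrite (DA_card hX) -sum1dep_card natr_sum !mulr_suml.
apply: eq_bigr => S1 S1_choice.
rewrite (partition_big (free_comps adj t0) (admissible adj t0 A)) /=; last first.
  by move=> S /andP[/eqP <- _]; apply: admissible_free_comps.
rewrite /XiA mul1r mulr_sumr; apply: eq_bigr => P P_adm.
rewrite (big_pred1 (glue S1 P)); last first.
  by move=> S; exact: (decomposition_fibre hX A_calA S1_choice P_adm S).
rewrite -(card_free_glue S1_choice P_adm) exprD mulfK //.
by rewrite expf_neq0 // pnatr_eq0.
Qed.
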